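(* Let $a,b$ be coprime integers with $|a|\ge b\ge 2$, and let $\mathcal{D}=\{0,1,\ldots,|a|-1\}$. Let $x\in\mathbb{R}$, and if $\tfrac{a}{b}>0$ assume $x>0$. Let $k\in\mathbb{Z}$ and $(d_j)_{j\le k}$ be a sequence in $\mathcal{D}$ with $d_k\neq 0$ such that the series $\sum_{j\le k} d_j\left(\tfrac{a}{b}\right)^j$ converges to $x$ in $\mathbb{C}$. Then this series is an $\tfrac{a}{b}$-expansion of $x$ if and only if it converges to $0$ in $\mathbb{Q}_p$ for every prime $p$ dividing $b$.
   Context: An $\tfrac{a}{b}$-expansion of $x$ is an expression $x=\sum_{j\le k} d_j\left(\tfrac{a}{b}\right)^j$ with $d_j\in\mathcal{D}$ and $d_k\neq 0$ such that for every integer $l\le k$ the number $N_l:=\sum_{j=l}^{k} d_j\left(\tfrac{a}{b}\right)^{j-l}$ lies in $b\mathbb{Z}$ (equivalently, $d_k\ldots d_l$ is the integer $\tfrac ab$-expansion of an element of $b\mathbb{Z}$, obtained by repeatedly applying the map $b\mathbb{Z}\to b\mathbb{Z}$, $N\mapsto \tfrac{b}{a}(N-d)$ with $d\in\mathcal{D}$ the unique digit making the result lie in $b\mathbb{Z}$, until reaching $0$). $\mathbb{Q}_p$ denotes the field of $p$-adic numbers. *)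

From HB Require Import structures.
From mathcomp Require Import all_boot all_order all_algebra.
From mathcomp Require Import all_classical all_reals all_analysis.
Set Implicit Arguments. Unset Strict Implicit. Unset Printing Implicit Defensive.
Import Order.TTheory GRing.Theory Num.Theory numFieldNormedType.Exports.
Local Open Scope classical_set_scope.
Local Open Scope ring_scope.

Definition ab_ratio (a b : int) : rat := a%:~R / b%:~R.

(* n-th partial sum of sum_{j<=k} d_j (a/b)^j : sum over j = k, k-1, ..., k-n *)
Definition ab_partial_sum (a b k : int) (d : int -> int) (n : nat) : rat :=
  \sum_(0 <= i < n.+1) (d (k - i%:Z))%:~R * ab_ratio a b ^ (k - i%:Z).

(* N_l = sum_{j=l}^{k} d_j (a/b)^(j-l)  (for l <= k; j = k - i, 0 <= i <= k - l) *)
Definition ab_Nl (a b k l : int) (d : int -> int) : rat :=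
  \sum_(0 <= i < (absz (k - l)).+1) (d (k - i%:Z))%:~R * ab_ratio a b ^ (k - i%:Z - l).

Definition ab_in_bZ (b : int) (q : rat) : Prop := exists z : int, q = (b * z)%:~R.

Definition ab_padic_val (p : nat) (q : rat) : int :=
  (logn p (absz (numq q)))%:Z - (logn p (absz (denq q)))%:Z.
Definition ab_padic_abs (p : nat) (q : rat) : rat :=
  if q == 0 then 0 else (p%:R : rat) ^ (- ab_padic_val p q).

Definition converges_to_0_Qp (p : nat) (s : nat -> rat) : Prop :=
  forall eps : rat, 0 < eps -> exists N : nat, forall n : nat, (N <= n)%N -> ab_padic_abs p (s n) < eps.

Definition ab_is_digit (a : int) (e : int) : bool := (0 <= e) && (e < `|a|).

Definition is_ab_expansion (R : realType) (a b : int) (x : R) (k : int) (d : int -> int) : Prop :=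
  [/\ (forall j : int, j <= k -> ab_is_digit a (d j)),
      d k != 0,
      (fun n : nat => (ratr (ab_partial_sum a b k d n) : R)) @ \oo --> x
    & (forall l : int, l <= k -> ab_in_bZ b (ab_Nl a b k l d))].

From HB Require Import structures.
From mathcomp Require Import all_boot all_order all_algebra.
From mathcomp Require Import all_classical all_reals all_analysis.
From mathcomp Require Import ring zify.
Import Order.TTheory GRing.Theory Num.Theory numFieldNormedType.Exports.
Local Open Scope classical_set_scope.
Local Open Scope ring_scope.

(* Write S_n for the n-th partial sum and M_n := sum_(i <= n) d_(k-i) a^(n-i) b^i.
   Then N_(k-n) = M_n / b^n and S_n = (a/b)^(k-n) M_n / b^n, so the series is an
   a/b-expansion iff b^(n+1) divides M_n for every n.  Since a is prime to b, for
   p | b we get v_p(S_n) = v_p(M_n) - k v_p(b), so S_n -> 0 in Q_p iff v_p(M_n)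
   is eventually above every bound.  Divisibility of M_n by b^(n+1) gives this at
   once.  Conversely, M_m = a^(m-n) M_n + b^(n+1) T for m >= n, so once the full
   p-part of b^(n+1) divides M_m it also divides M_n. *)

Section PadicValuation.

Variable p : nat.

Lemma ab_padic_val_frac (u w : int) : u != 0 -> w != 0 ->
  ab_padic_val p (u%:~R / w%:~R) = (logn p `|u|)%:Z - (logn p `|w|)%:Z.
Proof.
move=> u_neq0 w_neq0; set q := u%:~R / w%:~R.
have cross : numq q * w = u * denq q.
  apply: (@intr_inj rat); rewrite !intrM; apply/eqP.
  by rewrite -eqr_div ?intr_eq0 ?denq_neq0 // divq_num_den /q.
have q_neq0 : q != 0 by rewrite /q mulf_neq0 ?invr_eq0 ?intr_eq0.
have := congr1 (logn p) (congr1 absz cross); rewrite !abszM.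
rewrite !lognM ?absz_gt0 ?numq_eq0 ?denq_neq0 // /ab_padic_val; lia.
Qed.

Lemma ab_padic_valM (x y : rat) : x != 0 -> y != 0 ->
  ab_padic_val p (x * y) = ab_padic_val p x + ab_padic_val p y.
Proof.
move=> x_neq0 y_neq0.
have -> : x * y = (numq x * numq y)%:~R / (denq x * denq y)%:~R
  by rewrite !intrM -mulf_div !divq_num_den.
rewrite ab_padic_val_frac ?mulf_neq0 ?numq_eq0 ?denq_neq0 //.
rewrite !abszM !lognM ?absz_gt0 ?numq_eq0 ?denq_neq0 // /ab_padic_val; lia.
Qed.

Lemma ab_padic_valV (x : rat) : x != 0 -> ab_padic_val p x^-1 = - ab_padic_val p x.
Proof.
move=> x_neq0.
have -> : x^-1 = (denq x)%:~R / (numq x)%:~R by rewrite -{1}[x]divq_num_den invf_div.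
rewrite ab_padic_val_frac ?numq_eq0 ?denq_neq0 // /ab_padic_val; lia.
Qed.

Lemma ab_padic_valXz (x : rat) (z : int) : x != 0 ->
  ab_padic_val p (x ^ z) = z * ab_padic_val p x.
Proof.
move=> x_neq0.
have valXn n : ab_padic_val p (x ^+ n) = n%:Z * ab_padic_val p x.
  elim: n => [|n IHn].
    have -> : x ^+ 0 = 1%:~R / 1%:~R by rewrite expr0 divr1.
    rewrite ab_padic_val_frac // logn1; lia.
  by rewrite exprS ab_padic_valM ?expf_neq0 // IHn; lia.
case: z => n; first exact: valXn.
change (ab_padic_val p (x ^+ n.+1)^-1 = Negz n * ab_padic_val p x).
rewrite ab_padic_valV ?expf_neq0 // valXn NegzE; ring.
Qed.

Hypothesis p_gt1 : (1 < p)%N.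

Let P : rat := p%:R.

Let P_gt1 : 1 < P. Proof. by rewrite ltr1n. Qed.

Lemma converges_to_0_Qp_of_val_ge (s : nat -> rat) (c : int) :
  (forall n, s n != 0 -> n%:Z + c <= ab_padic_val p (s n)) ->
  converges_to_0_Qp p s.
Proof.
move=> val_ge eps eps_gt0.
have P_gt0 : 0 < P := lt_trans ltr01 P_gt1.
exists (Num.Def.archi_bound (P ^ (- c) / eps)) => n n_ge.
rewrite /ab_padic_abs; case: eqP => [_|/eqP sn_neq0]; first exact: eps_gt0.
apply: (@le_lt_trans _ _ (P ^ (- c) / P ^+ n)).
  rewrite exprnN -expfzDr ?gt_eqF //.
  by apply: ler_weXz2l; [exact: ltW | rewrite -opprD lerN2 addrC val_ge].
rewrite ltr_pdivrMr ?exprn_gt0 // mulrC -ltr_pdivrMr //.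
apply: lt_le_trans (archi_boundP _) _; first by rewrite divr_ge0 ?ltW ?exprz_gt0.
rewrite -natrX ler_nat; exact: leq_trans n_ge (ltnW (ltn_expl n p_gt1)).
Qed.

Lemma converges_to_0_Qp_val_ge (s : nat -> rat) : converges_to_0_Qp p s ->
  forall c : int, exists N, forall n, (N <= n)%N -> s n != 0 ->
    c <= ab_padic_val p (s n).
Proof.
move=> s_cvg c; have [N s_small] := s_cvg (P ^ (- c)) (exprz_gt0 _ (lt_trans ltr01 P_gt1)).
exists N => n n_ge sn_neq0; move: (s_small n n_ge).
by rewrite /ab_padic_abs (negbTE sn_neq0) ltr_eXz2l // ltrN2 => /ltW.
Qed.

End PadicValuation.

Section Numerator.

Variables (a b k : int) (d : int -> int).

Definition ab_numer (n : nat) : int :=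
  \sum_(0 <= i < n.+1) d (k - i%:Z) * a ^+ (n - i) * b ^+ i.

Hypothesis b_neq0 : b != 0.

Lemma ab_numer_div (n : nat) :
  (ab_numer n)%:~R / b%:~R ^+ n
  = \sum_(0 <= i < n.+1) (d (k - i%:Z))%:~R * ab_ratio a b ^+ (n - i) :> rat.
Proof.
rewrite /ab_numer rmorph_sum mulr_suml; apply: eq_big_nat => i /andP[_ i_le].
have bR_neq0 : (b%:~R : rat) != 0 by rewrite intr_eq0.
rewrite /ab_ratio !rmorphM /= !rmorphXn /= expr_div_n.
rewrite -[in b%:~R ^+ n](subnK (ltnSE i_le)) exprD; field.
by rewrite !expf_neq0.
Qed.

Lemma ab_Nl_numer (n : nat) :
  ab_Nl a b k (k - n%:Z) d = (ab_numer n)%:~R / b%:~R ^+ n.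
Proof.
rewrite /ab_Nl ab_numer_div (_ : k - (k - n%:Z) = n%:Z); last by ring.
apply: eq_big_nat => i /andP[_ i_le].
by rewrite (_ : k - i%:Z - (k - n%:Z) = (n - i)%N); last lia.
Qed.

Lemma ab_in_bZ_numer_dvd (n : nat) :
  ab_in_bZ b (ab_Nl a b k (k - n%:Z) d) <-> (b ^+ n.+1 %| ab_numer n)%Z.
Proof.
have bn_neq0 : (b%:~R : rat) ^+ n != 0 by rewrite expf_neq0 ?intr_eq0.
rewrite ab_Nl_numer; split.
  case=> z /(congr1 (fun t => t * b%:~R ^+ n)); rewrite mulfVK // => numer_eq.
  apply/dvdzP; exists z; apply: (@intr_inj rat).
  by rewrite numer_eq !intrM rmorphXn /= exprS; ring.
case/dvdzP=> z ->; exists z.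
by rewrite !intrM !rmorphXn /= exprS -[RHS](mulfK bn_neq0); congr (_ / _); ring.
Qed.

Lemma ab_in_bZ_Nl_numer_dvd :
  (forall l, l <= k -> ab_in_bZ b (ab_Nl a b k l d)) <->
  (forall n : nat, (b ^+ n.+1 %| ab_numer n)%Z).
Proof.
split=> [in_bZ n | numer_dvd l l_le].
  by apply/ab_in_bZ_numer_dvd/in_bZ; lia.
have -> : l = k - (absz (k - l))%:Z by rewrite gez0_abs ?subr_ge0 //; ring.
exact/ab_in_bZ_numer_dvd.
Qed.

Lemma ab_numer_shift (n m : nat) : (n <= m)%N ->
  exists T : int, ab_numer m = a ^+ (m - n) * ab_numer n + b ^+ n.+1 * T.
Proof.
move=> n_le_m.
exists (\sum_(n.+1 <= i < m.+1) d (k - i%:Z) * a ^+ (m - i) * b ^+ (i - n.+1)).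
rewrite /ab_numer (@big_cat_nat _ _ _ n.+1) //=; congr (_ + _).
  rewrite mulr_sumr; apply: eq_big_nat => i /andP[_ i_le].
  by rewrite (_ : (m - i = (m - n) + (n - i))%N) ?exprD; [ring | lia].
rewrite mulr_sumr; apply: eq_big_nat => i /andP[i_ge _].
by rewrite -[in b ^+ i](subnKC i_ge) exprD; ring.
Qed.

Lemma dvdz_ab_numer_shift (c : int) (n m : nat) : (n <= m)%N ->
  coprimez c a -> (c %| b ^+ n.+1)%Z -> (c %| ab_numer m)%Z -> (c %| ab_numer n)%Z.
Proof.
move=> n_le_m c_a c_bn c_numer; have [T numer_eq] := ab_numer_shift _ _ n_le_m.
rewrite -(Gauss_dvdzr _ (coprimezXr (m - n) c_a)).
have -> : a ^+ (m - n) * ab_numer n = ab_numer m - b ^+ n.+1 * T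
  by rewrite numer_eq; ring.
by rewrite rpredB // dvdz_mulr.
Qed.

Hypothesis a_neq0 : a != 0.

Let ratio_neq0 : ab_ratio a b != 0.
Proof. by rewrite /ab_ratio mulf_neq0 ?invr_eq0 ?intr_eq0. Qed.

Lemma ab_partial_sum_numer (n : nat) :
  ab_partial_sum a b k d n
  = (ab_numer n)%:~R / b%:~R ^+ n * ab_ratio a b ^ (k - n%:Z).
Proof.
rewrite /ab_partial_sum ab_numer_div mulr_suml; apply: eq_big_nat => i /andP[_ i_le].
rewrite -mulrA -[_ ^+ (n - i)]/(_ ^ (n - i)%N%:Z) -expfzDr //.
by congr (_ * _ ^ _); lia.
Qed.

Lemma ab_partial_sum_eq0 (n : nat) :
  (ab_partial_sum a b k d n == 0) = (ab_numer n == 0).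
Proof.
rewrite ab_partial_sum_numer !mulf_eq0 expfz_eq0 (negbTE ratio_neq0) andbF orbF.
by rewrite invr_eq0 expf_eq0 !intr_eq0 (negbTE b_neq0) andbF orbF.
Qed.

Lemma ab_padic_val_partial_sum (p : nat) (n : nat) :
  coprime p `|a| -> ab_numer n != 0 ->
  ab_padic_val p (ab_partial_sum a b k d n)
  = (logn p `|ab_numer n|)%:Z - k * (logn p `|b|)%:Z.
Proof.
move=> p_a numer_neq0; rewrite ab_partial_sum_numer -rmorphXn /=.
rewrite ab_padic_valM ?expfz_neq0 ?mulf_neq0 ?invr_eq0 ?intr_eq0 ?expf_neq0 //.
rewrite ab_padic_valXz // !ab_padic_val_frac ?expf_neq0 //.
rewrite abszX lognX (logn_coprime p_a) PoszM; ring.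
Qed.

Hypothesis coprime_ab : coprimez a b.

Let coprime_p_a (p : nat) : (p %| `|b|)%N -> coprime p `|a|.
Proof. by move=> p_b; apply: coprime_dvdl p_b _; rewrite coprime_sym. Qed.

Lemma numer_dvd_converges_to_0_Qp (p : nat) :
  (forall n : nat, (b ^+ n.+1 %| ab_numer n)%Z) -> prime p -> (p %| `|b|)%N ->
  converges_to_0_Qp p (ab_partial_sum a b k d).
Proof.
move=> numer_dvd p_pr p_b.
have vb_gt0 : (0 < logn p `|b|)%N by rewrite logn_gt0 mem_primes p_pr absz_gt0 b_neq0.
apply: (converges_to_0_Qp_of_val_ge p (prime_gt1 p_pr) _ (1 - k * (logn p `|b|)%:Z)).
move=> n; rewrite ab_partial_sum_eq0 => numer_neq0.
rewrite ab_padic_val_partial_sum ?coprime_p_a //.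
have : (n.+1 * logn p `|b| <= logn p `|ab_numer n|)%N.
  rewrite -lognX; apply: dvdn_leq_log; first by rewrite absz_gt0.
  by have := numer_dvd n; rewrite dvdzE abszX.
nia.
Qed.

Lemma converges_to_0_Qp_numer_dvd :
  (forall p : nat, prime p -> (p %| `|b|)%N ->
     converges_to_0_Qp p (ab_partial_sum a b k d)) ->
  forall n : nat, (b ^+ n.+1 %| ab_numer n)%Z.
Proof.
move=> cvg n; rewrite dvdzE abszX.
apply/dvdn_partP => [|q]; first by rewrite expn_gt0 absz_gt0 b_neq0.
rewrite mem_primes => /and3P[q_pr _ q_bn].
have q_b : (q %| `|b|)%N by move: q_bn; rewrite Euclid_dvdX // => /andP[].
rewrite p_part; set E := logn q (`|b| ^ n.+1).
have [N val_ge] := converges_to_0_Qp_val_ge q (prime_gt1 q_pr) _ (cvg q q_pr q_b)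
  (E%:Z - k * (logn q `|b|)%:Z).
have qE_numer : ((q ^ E)%:Z %| ab_numer (maxn N n))%Z.
  have [->|numer_neq0] := eqVneq (ab_numer (maxn N n)) 0; first exact: dvdz0.
  rewrite dvdzE absz_nat pfactor_dvdn ?absz_gt0 //.
  have := val_ge _ (leq_maxl N n); rewrite ab_partial_sum_eq0.
  by rewrite ab_padic_val_partial_sum ?coprime_p_a //; lia.
have := dvdz_ab_numer_shift _ _ _ (leq_maxr N n) _ _ qE_numer.
rewrite !dvdzE !absz_nat abszX -p_part dvdn_part; apply => //.
by rewrite coprimezE absz_nat p_part coprimeXl ?coprime_p_a.
Qed.

End Numerator.

Theorem mainTheorem2 (R : realType) (a b : int) (x : R) (k : int) (d : int -> int) :
  coprimez a b -> b <= `|a| -> 2 <= b ->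
  (0 < ab_ratio a b -> 0 < x) ->
  (forall j : int, j <= k -> ab_is_digit a (d j)) ->
  d k != 0 ->
  (fun n : nat => (ratr (ab_partial_sum a b k d n) : R)) @ \oo --> x ->
  (is_ab_expansion a b x k d <->
   (forall p : nat, prime p -> (p %| absz b)%N -> converges_to_0_Qp p (ab_partial_sum a b k d))).
Proof.
move=> coprime_ab b_le_a b_ge2 _ digits dk_neq0 cvg.
have b_neq0 : b != 0 by rewrite gt_eqF // (lt_le_trans _ b_ge2).
have a_neq0 : a != 0 by rewrite -normr_gt0 (lt_le_trans _ (le_trans b_ge2 b_le_a)).
transitivity (forall n : nat, (b ^+ n.+1 %| ab_numer a b k d n)%Z).
  rewrite -ab_in_bZ_Nl_numer_dvd //.
  by split=> [[]|in_bZ] //; split.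
split=> [numer_dvd p|]; first exact: numer_dvd_converges_to_0_Qp.
exact: converges_to_0_Qp_numer_dvd.
Qed.
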